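(* Every domain-complete space is convergence Choquet-complete. Every LCS-complete space is compactly Choquet-complete.
   Context: A space is domain-complete (resp. LCS-complete) if it is homeomorphic to a $G_\delta$ subset (countable intersection of open sets), with the subspace topology, of some continuous dcpo with its Scott topology (resp. of some locally compact sober space, locally compact meaning every point has a neighborhood base of compact saturated sets). The strong Choquet game on a space $X$: players $\beta$ and $\alpha$ alternate; at round $n$, $\beta$ picks a point $x_n$ and an open neighborhood $V_n$ of $x_n$ with $V_n\subseteq U_{n-1}$ (when $n\ge1$), and then $\alpha$ picks an open set $U_n$ with $x_n\in U_n\subseteq V_n$; $\alpha$'s strategies may depend on the entire history of the play. $X$ is Choquet-complete if $\alpha$ has a strategy ensuring $\bigcap_n U_n\neq\emptyset$; convergence Choquet-complete if $\alpha$ has a strategy ensuring that $(U_n)_{n\in\mathbb N}$ is a base of open neighborhoods of some point; compactly Choquet-complete if $\alpha$ has a strategy ensuring that $(U_n)_{n\in\mathbb N}$ is a base of open neighborhoods of some non-empty compact saturated set (i.e. every open set containing that set contains some $U_n$, and the set is contained in every $U_n$). *)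

From Stdlib Require Import List.
Import ListNotations.
Set Implicit Arguments.

Definition subset {X : Type} (A B : X -> Prop) : Prop := forall x, A x -> B x.

Definition is_topology (X : Type) (O : (X -> Prop) -> Prop) : Prop :=
  O (fun _ => True) /\
  (forall U V, O U -> O V -> O (fun x => U x /\ V x)) /\
  (forall F : (X -> Prop) -> Prop, (forall U, F U -> O U) ->
     O (fun x => exists U, F U /\ U x)).

Definition is_closed {X : Type} (O : (X -> Prop) -> Prop) (C : X -> Prop) : Prop :=
  O (fun x => ~ C x).

Definition subspace_open {Y : Type} (O : (Y -> Prop) -> Prop) (G : Y -> Prop)
  (S : {y : Y | G y} -> Prop) : Prop :=
  exists V, O V /\ forall z, S z <-> V (proj1_sig z).

Definition continuous {X Y : Type} (OX : (X -> Prop) -> Prop) (OY : (Y -> Prop) -> Prop)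
  (f : X -> Y) : Prop :=
  forall V, OY V -> OX (fun x => V (f x)).

Definition homeomorphic {X Y : Type} (OX : (X -> Prop) -> Prop) (OY : (Y -> Prop) -> Prop) : Prop :=
  exists (f : X -> Y) (g : Y -> X),
    (forall x, g (f x) = x) /\ (forall y, f (g y) = y) /\
    continuous OX OY f /\ continuous OY OX g.

Definition G_delta {Y : Type} (O : (Y -> Prop) -> Prop) (G : Y -> Prop) : Prop :=
  exists W : nat -> Y -> Prop, (forall n, O (W n)) /\ (forall y, G y <-> forall n, W n y).

Definition is_partial_order {D : Type} (le : D -> D -> Prop) : Prop :=
  (forall x, le x x) /\ (forall x y z, le x y -> le y z -> le x z) /\
  (forall x y, le x y -> le y x -> x = y).

Definition directed {D : Type} (le : D -> D -> Prop) (S : D -> Prop) : Prop :=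
  (exists d, S d) /\ (forall a b, S a -> S b -> exists c, S c /\ le a c /\ le b c).

Definition is_sup {D : Type} (le : D -> D -> Prop) (S : D -> Prop) (s : D) : Prop :=
  (forall d, S d -> le d s) /\ (forall u, (forall d, S d -> le d u) -> le s u).

Definition is_dcpo {D : Type} (le : D -> D -> Prop) : Prop :=
  is_partial_order le /\ forall S, directed le S -> exists s, is_sup le S s.

Definition way_below {D : Type} (le : D -> D -> Prop) (x y : D) : Prop :=
  forall S s, directed le S -> is_sup le S s -> le y s -> exists d, S d /\ le x d.

Definition is_continuous_dcpo {D : Type} (le : D -> D -> Prop) : Prop :=
  is_dcpo le /\
  forall x, directed le (fun y => way_below le y x) /\ is_sup le (fun y => way_below le y x) x.

Definition scott_open {D : Type} (le : D -> D -> Prop) (U : D -> Prop) : Prop :=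
  (forall x y, U x -> le x y -> U y) /\
  (forall S s, directed le S -> is_sup le S s -> U s -> exists d, S d /\ U d).

Definition point_closure {X : Type} (O : (X -> Prop) -> Prop) (x : X) (y : X) : Prop :=
  forall U, O U -> U y -> U x.

Definition irreducible_closed {X : Type} (O : (X -> Prop) -> Prop) (C : X -> Prop) : Prop :=
  is_closed O C /\ (exists x, C x) /\
  forall F1 F2, is_closed O F1 -> is_closed O F2 ->
    subset C (fun x => F1 x \/ F2 x) -> subset C F1 \/ subset C F2.

Definition sober {X : Type} (O : (X -> Prop) -> Prop) : Prop :=
  forall C, irreducible_closed O C ->
    exists! x, forall y, C y <-> point_closure O x y.

Definition compact {X : Type} (O : (X -> Prop) -> Prop) (K : X -> Prop) : Prop :=
  forall F : (X -> Prop) -> Prop,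
    (forall U, F U -> O U) -> subset K (fun x => exists U, F U /\ U x) ->
    exists l : list (X -> Prop), (forall U, In U l -> F U) /\
      subset K (fun x => exists U, In U l /\ U x).

Definition saturated {X : Type} (O : (X -> Prop) -> Prop) (Q : X -> Prop) : Prop :=
  forall x, (forall U, O U -> subset Q U -> U x) -> Q x.

Definition locally_compact {X : Type} (O : (X -> Prop) -> Prop) : Prop :=
  forall x U, O U -> U x ->
    exists Q V, compact O Q /\ saturated O Q /\ O V /\ V x /\ subset V Q /\ subset Q U.

Definition domain_complete (X : Type) (O : (X -> Prop) -> Prop) : Prop :=
  exists (D : Type) (le : D -> D -> Prop) (G : D -> Prop),
    is_continuous_dcpo le /\ G_delta (scott_open le) G /\
    homeomorphic O (subspace_open (scott_open le) G).

Definition LCS_complete (X : Type) (O : (X -> Prop) -> Prop) : Prop :=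
  exists (Y : Type) (OY : (Y -> Prop) -> Prop) (G : Y -> Prop),
    is_topology OY /\ sober OY /\ locally_compact OY /\ G_delta OY G /\
    homeomorphic O (subspace_open OY G).

(* A strategy for alpha maps the history of beta's moves (x_0,V_0),...,(x_n,V_n)
   (oldest first; alpha's earlier moves are determined by the strategy itself)
   to alpha's answer U_n. *)
Definition strategy (X : Type) := list (X * (X -> Prop)) -> (X -> Prop).

Definition beta_history {X : Type} (x : nat -> X) (V : nat -> X -> Prop) (n : nat)
  : list (X * (X -> Prop)) :=
  map (fun i => (x i, V i)) (seq 0 (S n)).

Definition alpha_move {X : Type} (s : strategy X) (x : nat -> X) (V : nat -> X -> Prop)
  (n : nat) : X -> Prop := s (beta_history x V n).

Definition beta_legal_at {X : Type} (O : (X -> Prop) -> Prop) (s : strategy X)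
  (x : nat -> X) (V : nat -> X -> Prop) (k : nat) : Prop :=
  O (V k) /\ V k (x k) /\ (forall m, k = S m -> subset (V k) (alpha_move s x V m)).

Definition winning_strategy {X : Type} (O : (X -> Prop) -> Prop)
  (W : (nat -> X -> Prop) -> Prop) (s : strategy X) : Prop :=
  (forall x V n, (forall k, k <= n -> beta_legal_at O s x V k) ->
     O (alpha_move s x V n) /\ alpha_move s x V n (x n) /\
     subset (alpha_move s x V n) (V n)) /\
  (forall x V, (forall k, beta_legal_at O s x V k) -> W (alpha_move s x V)).

Definition choquet_complete (X : Type) (O : (X -> Prop) -> Prop) : Prop :=
  exists s, winning_strategy O (fun U => exists y, forall n, U n y) s.

Definition convergence_choquet_complete (X : Type) (O : (X -> Prop) -> Prop) : Prop :=
  exists s, winning_strategy O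
    (fun U => exists y, (forall n, U n y) /\
       (forall W, O W -> W y -> exists n, subset (U n) W)) s.

Definition compactly_choquet_complete (X : Type) (O : (X -> Prop) -> Prop) : Prop :=
  exists s, winning_strategy O
    (fun U => exists Q, (exists y, Q y) /\ compact O Q /\ saturated O Q /\
       (forall n, subset Q (U n)) /\
       (forall W, O W -> subset Q W -> exists n, subset (U n) W)) s.

From mathcomp Require classical_sets.
From Stdlib Require Import List Arith Lia Classical ClassicalEpsilon
  FunctionalExtensionality PropExtensionality.
Import ListNotations.

(* A homeomorphism onto a G_delta
   subspace G = (intersection of the W_n) of a space Y is recast as an
   embedding p : X -> Y with image G (embedding_onto).  Alpha's strategy keeps
   a state in Y, chosen at round n inside the pull-back of beta's move V_n,
   inside W_n and inside the previous state; such state-based strategies are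
   built once and for all by stateful_strategy.
   - In a continuous dcpo the state is an approximant y_n << p(x_n); the y_n
     form a <<-chain whose supremum is a limit point of alpha's moves
     (way_below_chain_sup, interpolation via scott_open_way_above).
   - In a locally compact sober space the state is a compact saturated
     neighbourhood K_n of p(x_n); sober spaces are well-filtered
     (well_filtered, proved with Zorn's lemma), so the intersection of the
     K_n is a non-empty compact saturated set with the K_n as a neighbourhood
     base, and it pulls back to the required compact set in X. *)

Lemma open_ext {Y : Type} (OY : (Y -> Prop) -> Prop) (U V : Y -> Prop) :
  OY U -> (forall y, U y <-> V y) -> OY V.
Proof.
  intros HU HUV. replace V with U; [exact HU|].
  apply functional_extensionality; intro y; apply propositional_extensionality; apply HUV.
Qed.

Lemma open_union2 {Y : Type} (OY : (Y -> Prop) -> Prop) : is_topology OY ->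
  forall A B, OY A -> OY B -> OY (fun y => A y \/ B y).
Proof.
  intros [_ [_ Hunion]] A B HA HB.
  apply open_ext with (fun y => exists U, (U = A \/ U = B) /\ U y).
  - apply Hunion. intros U [-> | ->]; assumption.
  - intro y; split.
    + intros [U [[-> | ->] HU]]; auto.
    + intros [HA' | HB']; eauto.
Qed.

Lemma open_empty {Y : Type} (OY : (Y -> Prop) -> Prop) : is_topology OY ->
  OY (fun _ => False).
Proof.
  intros [_ [_ Hunion]].
  apply open_ext with (fun y => exists U, (fun _ : Y -> Prop => False) U /\ U y).
  - apply Hunion. intros _ [].
  - intro y; split; [intros [_ [[] _]] | intros []].
Qed.

Definition embedding_onto {X Y : Type} (O : (X -> Prop) -> Prop)
  (OY : (Y -> Prop) -> Prop) (G : Y -> Prop) (p : X -> Y) : Prop :=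
  (forall x, G (p x)) /\ (forall y, G y -> exists x, p x = y) /\
  (forall V, OY V -> O (fun x => V (p x))) /\
  (forall U, O U -> exists V, OY V /\ forall x, U x <-> V (p x)).

Lemma homeomorphic_embedding_onto {X Y : Type} (O : (X -> Prop) -> Prop)
  (OY : (Y -> Prop) -> Prop) (G : Y -> Prop) :
  homeomorphic O (subspace_open OY G) -> exists p, embedding_onto O OY G p.
Proof.
  intros [f [g [gf [fg [cf cg]]]]].
  exists (fun x => proj1_sig (f x)). split; [|split; [|split]].
  - intro x. exact (proj2_sig (f x)).
  - intros y Gy. exists (g (exist G y Gy)). rewrite fg. reflexivity.
  - intros V OV. apply (cf (fun z => V (proj1_sig z))). exists V; split; tauto.
  - intros U OU. destruct (cg U OU) as [V [OV HV]].
    exists V; split; [exact OV|]. intro x. rewrite <- (gf x) at 1. apply HV.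
Qed.

Lemma list_choice {A B : Type} (F : A -> Prop) (R : A -> B -> Prop) (l' : list B) :
  (forall b, In b l' -> exists a, F a /\ R a b) ->
  exists l, (forall a, In a l -> F a) /\ (forall b, In b l' -> exists a, In a l /\ R a b).
Proof.
  induction l' as [|b l' IH]; intros H.
  - exists []. split; intros _ [].
  - destruct (H b (or_introl eq_refl)) as [a [Fa Rab]].
    destruct IH as [l [Hl HR]]; [intros b' Hb'; apply H; right; exact Hb'|].
    exists (a :: l). split.
    + intros a' [<- | Ha']; auto.
    + intros b' [<- | Hb'].
      * exists a; split; [left|]; auto.
      * destruct (HR b' Hb') as [a' [Ha' Rab']]. exists a'; split; [right|]; auto.
Qed.

Section Embedding.
Context {X Y : Type} (O : (X -> Prop) -> Prop) (OY : (Y -> Prop) -> Prop)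
  (G : Y -> Prop) (p : X -> Y).
Hypothesis p_emb : embedding_onto O OY G p.

Lemma compact_preimage (K : Y -> Prop) :
  compact OY K -> subset K G -> compact O (fun x => K (p x)).
Proof.
  destruct p_emb as [_ [p_onto [_ p_open]]].
  intros HK KG F HF Hcov.
  set (traces := fun U V => forall x, U x <-> V (p x)).
  destruct (HK (fun V => OY V /\ exists U, F U /\ traces U V)) as [l' [Hl' Hcov']].
  - intros V [OV _]; exact OV.
  - intros y Ky. destruct (p_onto y (KG y Ky)) as [x <-].
    destruct (Hcov x Ky) as [U [FU Ux]].
    destruct (p_open U (HF U FU)) as [V [OV HV]].
    exists V. split; [split; [exact OV | exists U; auto] | apply HV; exact Ux].
  - destruct (list_choice F traces l') as [l [Hl Htr]].
    { intros V HV. destruct (Hl' V HV) as [_ HU]. exact HU. }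
    exists l; split; [exact Hl|].
    intros x Kx. destruct (Hcov' (p x) Kx) as [V [HV Vx]].
    destruct (Htr V HV) as [U [HU HUV]]. exists U; split; [exact HU | apply HUV; exact Vx].
Qed.

Lemma saturated_preimage (K : Y -> Prop) :
  saturated OY K -> saturated O (fun x => K (p x)).
Proof.
  destruct p_emb as [_ [_ [p_cont _]]].
  intros HK x Hx. apply HK. intros V OV KV.
  apply (Hx (fun x' => V (p x'))); [apply p_cont; exact OV|].
  intros x' Kx'. apply KV. exact Kx'.
Qed.

End Embedding.

Section StatefulStrategies.
Context {X St : Type}.

Fixpoint replay (step : nat -> option St -> X -> (X -> Prop) -> St)
  (prev : option St) (k : nat) (h : list (X * (X -> Prop))) : option St :=
  match h with
  | [] => prev
  | (xk, Vk) :: t => replay step (Some (step k prev xk Vk)) (S k) t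
  end.

Definition stateful (step : nat -> option St -> X -> (X -> Prop) -> St)
  (out : St -> X -> Prop) : strategy X :=
  fun h => match replay step None 0 h with Some st => out st | None => fun _ => True end.

Fixpoint run (step : nat -> option St -> X -> (X -> Prop) -> St)
  (x : nat -> X) (V : nat -> X -> Prop) (n : nat) : St :=
  match n with
  | 0 => step 0 None (x 0) (V 0)
  | S m => step (S m) (Some (run step x V m)) (x (S m)) (V (S m))
  end.

Definition previous (state : nat -> St) (n : nat) : option St :=
  match n with 0 => None | S m => Some (state m) end.

Lemma replay_snoc step l : forall prev k xk Vk,
  replay step prev k (l ++ [(xk, Vk)]) = Some (step (k + length l) (replay step prev k l) xk Vk).
Proof.
  induction l as [|[x0 V0] l IH]; intros prev k xk Vk; simpl.
  - rewrite Nat.add_0_r; reflexivity.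
  - rewrite IH. replace (S k + length l) with (k + S (length l)) by lia. reflexivity.
Qed.

Lemma replay_history step x V n :
  replay step None 0 (beta_history x V n) = Some (run step x V n).
Proof.
  induction n as [|n IH]; [reflexivity|].
  unfold beta_history. rewrite seq_S, map_app. simpl map at 2.
  rewrite replay_snoc. fold (beta_history x V n). rewrite IH.
  unfold beta_history. rewrite length_map, length_seq. reflexivity.
Qed.

Lemma stateful_alpha_move step out x V n :
  alpha_move (stateful step out) x V n = out (run step x V n).
Proof. unfold alpha_move, stateful. rewrite replay_history. reflexivity. Qed.

(* A strategy for alpha may be specified by a state [st] kept along the play,
   answered as [out st]: if, whatever legal move beta makes, alpha can choose a
   new (valid) state satisfying [Good] with respect to the previous one, then
   some strategy realises such a choice at every round of every legal play. *)
Variables (O : (X -> Prop) -> Prop) (out : St -> X -> Prop) (Valid : St -> Prop)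
  (Good : nat -> option St -> X -> (X -> Prop) -> St -> Prop).
Hypothesis state_inhabited : X -> inhabited St.
Hypothesis answer : forall k prev xk Vk, O Vk -> Vk xk ->
  match prev with None => True | Some st => Valid st /\ subset Vk (out st) end ->
  exists st, Valid st /\ Good k prev xk Vk st.

Lemma stateful_strategy :
  exists (s : strategy X) (state : (nat -> X) -> (nat -> X -> Prop) -> nat -> St),
    (forall x V n, alpha_move s x V n = out (state x V n)) /\
    (forall x V n, (forall k, k <= n -> beta_legal_at O s x V k) ->
       Valid (state x V n) /\
       Good n (previous (state x V) n) (x n) (V n) (state x V n)).
Proof.
  set (step := fun k prev xk Vk =>
    epsilon (state_inhabited xk) (fun st => Valid st /\ Good k prev xk Vk st)).
  assert (step_spec : forall k prev xk Vk, (exists st, Valid st /\ Good k prev xk Vk st) ->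
    Valid (step k prev xk Vk) /\ Good k prev xk Vk (step k prev xk Vk)).
  { intros k prev xk Vk. apply (epsilon_spec (state_inhabited xk)). }
  exists (stateful step out), (run step). split; [apply stateful_alpha_move|].
  intros x V n. induction n as [|m IH]; intros Hlegal;
    destruct (Hlegal _ (le_n _)) as [OV [Vx Hsub]];
    apply step_spec, answer; simpl; auto.
  split.
  - apply IH. intros k Hk; apply Hlegal; lia.
  - rewrite <- stateful_alpha_move. apply Hsub; reflexivity.
Qed.

End StatefulStrategies.

Section ContinuousDcpo.
Context {D : Type} (le : D -> D -> Prop).
Hypothesis le_cdcpo : is_continuous_dcpo le.

Let le_po : is_partial_order le := proj1 (proj1 le_cdcpo).
Let le_refl : forall a, le a a := proj1 le_po.
Let le_trans : forall a b c, le a b -> le b c -> le a c := proj1 (proj2 le_po).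

Lemma way_below_le a b : way_below le a b -> le a b.
Proof.
  intros Hab. destruct (Hab (fun d => d = b) b) as [d [-> Hd]]; auto.
  - split; [exists b; reflexivity|]. intros ? ? -> ->. exists b; auto.
  - split; [intros d ->; apply le_refl | intros u Hu; apply Hu; reflexivity].
Qed.

Lemma way_below_le_trans a b c : way_below le a b -> le b c -> way_below le a c.
Proof. intros Hab Hbc S s HS Hs Hcs. apply (Hab S s HS Hs). eauto. Qed.

Lemma le_way_below_trans a b c : le a b -> way_below le b c -> way_below le a c.
Proof.
  intros Hab Hbc S s HS Hs Hcs.
  destruct (Hbc S s HS Hs Hcs) as [d [Sd Hbd]]. eauto.
Qed.

Lemma scott_open_upper A a b : scott_open le A -> A a -> le a b -> A b.
Proof. intros [Hup _] Aa Hab. eauto. Qed.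

Lemma scott_open_full : scott_open le (fun _ => True).
Proof. split; [auto | intros S s [[d Sd] _] _ _; exists d; auto]. Qed.

Lemma scott_open_inter A B :
  scott_open le A -> scott_open le B -> scott_open le (fun a => A a /\ B a).
Proof.
  intros [HAup HAin] [HBup HBin]. split.
  - intros a b [Aa Ba] Hab; split; eauto.
  - intros S s HS Hs [As Bs].
    destruct (HAin S s HS Hs As) as [d1 [Sd1 Ad1]].
    destruct (HBin S s HS Hs Bs) as [d2 [Sd2 Bd2]].
    destruct (proj2 HS d1 d2 Sd1 Sd2) as [c [Sc [H1 H2]]].
    exists c; split; [|split]; eauto.
Qed.

Lemma scott_open_approx A z : scott_open le A -> A z -> exists d, way_below le d z /\ A d.
Proof.
  intros [_ HAin] Az. destruct (proj2 le_cdcpo z) as [Hdir Hsup].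
  destruct (HAin _ _ Hdir Hsup Az) as [d [Hdz Ad]]. eauto.
Qed.

(* Interpolation: the sets {z | y << z} are Scott-open. *)
Lemma scott_open_way_above y : scott_open le (way_below le y).
Proof.
  pose proof (proj2 le_cdcpo) as Happrox. split.
  - intros a b Hya Hab. eapply way_below_le_trans; eauto.
  - intros S s HS Hs Hys.
    set (T := fun e => exists d, S d /\ way_below le e d).
    assert (HT : directed le T).
    { destruct HS as [[d0 Sd0] HSdir]. split.
      - destruct (Happrox d0) as [[[e He] _] _]. exists e, d0; auto.
      - intros e1 e2 [d1 [Sd1 He1]] [d2 [Sd2 He2]].
        destruct (HSdir d1 d2 Sd1 Sd2) as [c [Sc [H1 H2]]].
        destruct (proj2 (proj1 (Happrox c)) e1 e2) as [e [Hec [Hle1 Hle2]]];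
          [eapply way_below_le_trans; eauto .. |].
        exists e; split; [exists c|]; auto. }
    assert (HTs : is_sup le T s).
    { split.
      - intros e [d [Sd Hed]]. apply le_trans with d; [apply way_below_le; exact Hed|].
        apply (proj1 Hs); exact Sd.
      - intros u Hu. apply (proj2 Hs). intros d Sd. apply (proj2 (proj2 (Happrox d))).
        intros e Hed. apply Hu. exists d; auto. }
    destruct (Hys T s HT HTs (le_refl s)) as [e [[d [Sd Hed]] Hye]].
    exists d; split; [exact Sd|]. eapply le_way_below_trans; eauto.
Qed.

Lemma way_below_chain_sup (y : nat -> D) : (forall n, way_below le (y n) (y (S n))) ->
  exists s, (forall n, way_below le (y n) s) /\
            (forall A, scott_open le A -> A s -> exists n, A (y n)).
Proof.
  intros Hchain.
  assert (Hmono : forall n m, n <= m -> le (y n) (y m)).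
  { intros n m Hnm. induction Hnm; [apply le_refl|].
    apply le_trans with (y m); [exact IHHnm | apply way_below_le, Hchain]. }
  set (T := fun d => exists n, d = y n).
  assert (HT : directed le T).
  { split; [exists (y 0), 0; reflexivity|].
    intros a b [n ->] [m ->]. exists (y (Nat.max n m)).
    split; [eexists; reflexivity | split; apply Hmono; lia]. }
  destruct (proj2 (proj1 le_cdcpo) T HT) as [s Hs]. exists s. split.
  - intro n. apply way_below_le_trans with (y (S n)); [apply Hchain|].
    apply (proj1 Hs). exists (S n); reflexivity.
  - intros A [_ HAin] As. destruct (HAin T s HT Hs As) as [d [[n ->] Ad]]. eauto.
Qed.

End ContinuousDcpo.

Definition way_above_opt {D : Type} (le : D -> D -> Prop) (prev : option D) : D -> Prop :=
  match prev with None => fun _ => True | Some y => way_below le y end.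

(* Alpha keeps an approximant y_n << p(x_n), chosen inside V_n, the n-th open
   set of the G_delta and way above y_(n-1), and plays U_n = {x | y_n << p x}.
   The y_n form a <<-chain whose supremum is the required limit point. *)
Lemma Gdelta_scott_convergence_choquet_complete {X D : Type}
  (O : (X -> Prop) -> Prop) (le : D -> D -> Prop) (G : D -> Prop) (p : X -> D) :
  is_continuous_dcpo le -> G_delta (scott_open le) G ->
  embedding_onto O (scott_open le) G p -> convergence_choquet_complete O.
Proof.
  intros Hcd [W [W_open W_G]] Hemb.
  pose proof Hemb as [p_in [p_onto [p_cont p_open]]].
  set (out := fun y x => way_below le y (p x)).
  set (Good := fun k prev xk (Vk : X -> Prop) y =>
    way_below le y (p xk) /\ W k y /\ (forall x, le y (p x) -> Vk x) /\
    way_above_opt le prev y).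
  destruct (stateful_strategy O out (fun _ => True) Good (fun x => inhabits (p x)))
    as [s [state [Hout Hgood]]].
  - intros k prev xk Vk OV Vx Hprev.
    destruct (p_open Vk OV) as [V' [OV' HV']].
    set (A := fun z => (V' z /\ W k z) /\ way_above_opt le prev z).
    assert (OA : scott_open le A).
    { repeat apply scott_open_inter; auto.
      destruct prev; [apply scott_open_way_above | apply scott_open_full]; auto. }
    assert (Axk : A (p xk)).
    { split; [split|].
      - apply HV'; exact Vx.
      - apply W_G, p_in.
      - destruct prev as [y'|]; [apply (proj2 Hprev); exact Vx | exact I]. }
    destruct (scott_open_approx le Hcd A _ OA Axk) as [d [Hd [[V'd Wd] Hprevd]]].
    exists d. split; [exact I|]. split; [exact Hd|]. split; [exact Wd|]. split; [|exact Hprevd].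
    intros x Hx. apply HV'. apply (scott_open_upper le V' d); auto.
  - exists s. split.
    + intros x V n Hlegal. rewrite Hout.
      destruct (Hgood x V n Hlegal) as [_ [Hyx [_ [HyV _]]]].
      split; [apply p_cont, scott_open_way_above; exact Hcd|].
      split; [exact Hyx|]. intros x' Hx'. apply HyV, (way_below_le le Hcd). exact Hx'.
    + intros x V Hlegal. set (y := state x V).
      assert (Hg : forall n, Good n (previous y n) (x n) (V n) (y n))
        by (intro n; apply Hgood; auto).
      destruct (way_below_chain_sup le Hcd y) as [sup [Hwb Happrox]].
      { intro n. exact (proj2 (proj2 (proj2 (Hg (S n))))). }
      assert (Gsup : G sup).
      { apply W_G. intro k. apply (scott_open_upper le (W k) (y k)); auto.
        - apply (Hg k).
        - apply (way_below_le le Hcd). apply Hwb. }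
      destruct (p_onto sup Gsup) as [xs Hxs]. exists xs. split.
      * intro n. rewrite Hout. unfold out. rewrite Hxs. apply Hwb.
      * intros U OU Uxs. destruct (p_open U OU) as [V' [OV' HV']].
        destruct (Happrox V' OV') as [n V'yn]; [rewrite <- Hxs; apply HV'; exact Uxs|].
        exists n. intros x' Hx'. rewrite Hout in Hx'. apply HV'.
        apply (scott_open_upper le V' (y n)); auto. apply (way_below_le le Hcd). exact Hx'.
Qed.

Definition union_of {T : Type} (F : (T -> Prop) -> Prop) : T -> Prop :=
  fun t => exists A, F A /\ A t.

Definition chain {T : Type} (F : (T -> Prop) -> Prop) : Prop :=
  forall A B, F A -> F B -> subset A B \/ subset B A.

Lemma zorn_union_closed {T : Type} (P : (T -> Prop) -> Prop) :
  (forall F, (forall A, F A -> P A) -> chain F -> P (union_of F)) ->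
  exists A, P A /\ forall B, subset A B -> ~ subset B A -> ~ P B.
Proof.
  intros Hclosed.
  destruct (@classical_sets.Zorn_bigcup T P) as [A [PA Hmax]].
  - intros F HF Htot.
    replace (classical_sets.bigcup F (fun A => A)) with (union_of F).
    + apply Hclosed; [exact HF|]. intros A B FA FB. exact (Htot A B FA FB).
    + apply functional_extensionality; intro t; apply propositional_extensionality.
      split; [intros [A [FA At]] | intros [A FA At]]; exists A; auto.
  - exists A; split; [exact PA|]. intros B HAB HBA. apply Hmax. split; assumption.
Qed.

Lemma chain_list_bound {T : Type} (F : (T -> Prop) -> Prop) (W : T -> Prop) :
  chain F -> forall l, (forall B, In B l -> F B \/ B = W) ->
  subset (fun t => exists B, In B l /\ B t) W \/
  exists A, F A /\ subset (fun t => exists B, In B l /\ B t) (fun t => A t \/ W t).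
Proof.
  intros Hchain l. induction l as [|B l IH]; intros Hl.
  { left. intros t [B [[] _]]. }
  destruct IH as [IH | [A [FA IH]]]; [intros B' HB'; apply Hl; right; exact HB'| |];
    destruct (Hl B (or_introl eq_refl)) as [FB | ->].
  - right. exists B. split; [exact FB|].
    intros t [B' [[<- | HB'] Bt]]; [left; exact Bt | right; apply IH; eauto].
  - left. intros t [B' [[<- | HB'] Bt]]; [exact Bt | apply IH; eauto].
  - destruct (Hchain A B FA FB) as [HAB | HBA].
    + right. exists B. split; [exact FB|].
      intros t [B' [[<- | HB'] Bt]]; [left; exact Bt|].
      destruct (IH t) as [At | Wt]; eauto.
    + right. exists A. split; [exact FA|].
      intros t [B' [[<- | HB'] Bt]]; [left; apply HBA; exact Bt | apply IH; eauto].
  - right. exists A. split; [exact FA|].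
    intros t [B' [[<- | HB'] Bt]]; [right; exact Bt | apply IH; eauto].
Qed.

Lemma saturated_specialization {Y : Type} (OY : (Y -> Prop) -> Prop) (K : Y -> Prop) x y :
  saturated OY K -> K y -> point_closure OY x y -> K x.
Proof. intros HK Ky Hxy. apply HK. intros U OU KU. apply (Hxy U OU), KU, Ky. Qed.

Lemma inter_saturated {Y : Type} (OY : (Y -> Prop) -> Prop) (K : nat -> Y -> Prop) :
  (forall n, saturated OY (K n)) -> saturated OY (fun y => forall n, K n y).
Proof.
  intros HK y Hy n. apply HK. intros U OU KU.
  apply Hy; [exact OU|]. intros z Kz. apply KU, Kz.
Qed.

Section WellFiltered.
Context {Y : Type} (OY : (Y -> Prop) -> Prop).
Hypotheses (OY_top : is_topology OY) (OY_sober : sober OY).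
Variable K : nat -> Y -> Prop.
Hypotheses (K_compact : forall n, compact OY (K n)) (K_saturated : forall n, saturated OY (K n))
  (K_decr : forall n, subset (K (S n)) (K n)).

Lemma K_antitone n m : n <= m -> subset (K m) (K n).
Proof.
  intros Hnm. induction Hnm as [|m Hnm IH]; [intros y Ky; exact Ky|].
  intros y Ky. apply IH, K_decr, Ky.
Qed.

Section Avoiding.
Variable W : Y -> Prop.
Hypothesis W_open : OY W.

Definition avoiding (A : Y -> Prop) : Prop :=
  OY A /\ forall n, ~ subset (K n) (fun y => A y \/ W y).

(* By compactness of the K n, avoiding sets are closed under unions of chains,
   as long as W itself contains none of the K n. *)
Lemma avoiding_chain_union F : ~ (exists n, subset (K n) W) ->
  (forall A, F A -> avoiding A) -> chain F -> avoiding (union_of F).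
Proof.
  intros Hno HF Hchain. split.
  - apply (proj2 (proj2 OY_top)). intros A FA; apply HF, FA.
  - intros n Hcov.
    destruct (K_compact n (fun B => F B \/ B = W)) as [l [Hl Hcovl]].
    + intros B [FB | ->]; [apply HF, FB | exact W_open].
    + intros y Ky. destruct (Hcov y Ky) as [[A [FA Ay]] | Wy]; eauto.
    + destruct (chain_list_bound F W Hchain l Hl) as [HW | [A [FA HA]]].
      * apply Hno. exists n. intros y Ky. apply HW, Hcovl, Ky.
      * apply (proj2 (HF A FA) n). intros y Ky. apply HA, Hcovl, Ky.
Qed.

Section Maximal.
Variable A : Y -> Prop.
Hypotheses (A_avoiding : avoiding A)
  (A_maximal : forall B, subset A B -> ~ subset B A -> ~ avoiding B).

Lemma maximal_escape B : OY B -> ~ subset B A ->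
  exists n, subset (K n) (fun y => (A y \/ B y) \/ W y).
Proof.
  intros OB HBA. apply NNPP. intros Hno. apply (A_maximal (fun y => A y \/ B y)).
  - intros y Ay; left; exact Ay.
  - intros HAB. apply HBA. intros y By. apply HAB. right; exact By.
  - split; [apply open_union2; auto; apply A_avoiding|].
    intros n Hn. apply Hno. exists n. exact Hn.
Qed.

Lemma maximal_contains_W : subset W A.
Proof.
  apply NNPP. intros HWA. destruct (maximal_escape W W_open HWA) as [n Hn].
  apply (proj2 A_avoiding n). intros y Ky. destruct (Hn y Ky) as [[Ay | Wy] | Wy]; auto.
Qed.

Lemma maximal_complement_meets n : exists y, K n y /\ ~ A y.
Proof.
  apply NNPP. intros Hno. apply (proj2 A_avoiding n). intros y Ky. left.
  apply NNPP. intros nAy. apply Hno. eauto.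
Qed.

Lemma maximal_complement_irreducible : irreducible_closed OY (fun y => ~ A y).
Proof.
  split; [|split].
  - unfold is_closed. apply open_ext with A; [apply A_avoiding|].
    intro y; split; [tauto | apply NNPP].
  - destruct (maximal_complement_meets 0) as [y [_ nAy]]. eauto.
  - intros F1 F2 HF1 HF2 Hsplit. apply NNPP. intros Hno.
    apply not_or_and in Hno as [nF1 nF2].
    assert (Hescape : forall F, is_closed OY F -> ~ subset (fun y => ~ A y) F ->
      exists n, subset (K n) (fun y => (A y \/ ~ F y) \/ W y)).
    { intros F HF nF. apply maximal_escape; [exact HF|].
      intros HFA. apply nF. intros y nAy. apply NNPP. intros nFy. apply nAy, HFA, nFy. }
    destruct (Hescape F1 HF1 nF1) as [k1 Hk1]. destruct (Hescape F2 HF2 nF2) as [k2 Hk2].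
    apply (proj2 A_avoiding (Nat.max k1 k2)). intros y Ky.
    destruct (classic (A y)) as [Ay | nAy]; [left; exact Ay|].
    destruct (Hk1 y (K_antitone k1 _ (Nat.le_max_l _ _) y Ky)) as [[? | nF1y] | ?]; auto.
    destruct (Hk2 y (K_antitone k2 _ (Nat.le_max_r _ _) y Ky)) as [[? | nF2y] | ?]; auto.
    destruct (Hsplit y nAy); contradiction.
Qed.

End Maximal.
End Avoiding.

(* Sober spaces are well-filtered (for decreasing sequences): if an open set W
   contains the intersection of the K n, it contains one of them.  Otherwise a
   maximal avoiding open set A exists by Zorn; its complement is irreducible,
   hence the closure of a point x, which lies in every K n by saturation, so
   x lies in W, which is contained in A: a contradiction. *)
Theorem well_filtered W : OY W -> subset (fun y => forall n, K n y) W ->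
  exists n, subset (K n) W.
Proof.
  intros OW HW. apply NNPP. intros Hno.
  destruct (zorn_union_closed (avoiding W)) as [A [HA Hmax]].
  { intros F HF Hchain. apply avoiding_chain_union; assumption. }
  destruct (OY_sober _ (maximal_complement_irreducible W A HA Hmax)) as [x [Hx _]].
  assert (nAx : ~ A x) by (apply (proj2 (Hx x)); intros U _ Ux; exact Ux).
  apply nAx, (maximal_contains_W W OW A HA Hmax), HW. intro n.
  destruct (maximal_complement_meets W A HA n) as [y [Ky nAy]].
  apply (saturated_specialization OY (K n) x y); [apply K_saturated | exact Ky |].
  apply Hx, nAy.
Qed.

Lemma inter_nonempty : (forall n, exists y, K n y) -> exists y, forall n, K n y.
Proof.
  intros Hne. apply NNPP. intros Hempty.
  destruct (well_filtered (fun _ => False) (open_empty OY OY_top)) as [n Hn].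
  - intros y Hy. apply Hempty. eauto.
  - destruct (Hne n) as [y Ky]. exact (Hn y Ky).
Qed.

Lemma inter_compact : compact OY (fun y => forall n, K n y).
Proof.
  intros F HF Hcov.
  destruct (well_filtered (union_of F)) as [n Hn].
  - apply (proj2 (proj2 OY_top)). exact HF.
  - exact Hcov.
  - destruct (K_compact n F HF Hn) as [l [Hl Hcovl]].
    exists l. split; [exact Hl|]. intros y Hy. apply Hcovl, Hy.
Qed.

End WellFiltered.

Definition interior_opt {Y : Type} (prev : option ((Y -> Prop) * (Y -> Prop))) : Y -> Prop :=
  match prev with None => fun _ => True | Some st => snd st end.

(* Alpha keeps a compact saturated K_n with an open I_n,
   p(x_n) in I_n, I_n inside K_n, K_n inside V_n, the n-th open set of the
   G_delta and I_(n-1); it plays U_n = p^-1(I_n).  The K_n decrease, and by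
   well-filteredness their intersection is the required compact set. *)
Lemma Gdelta_LCS_compactly_choquet_complete {X Y : Type}
  (O : (X -> Prop) -> Prop) (OY : (Y -> Prop) -> Prop) (G : Y -> Prop) (p : X -> Y) :
  is_topology OY -> sober OY -> locally_compact OY -> G_delta OY G ->
  embedding_onto O OY G p -> compactly_choquet_complete O.
Proof.
  intros Htop Hsob Hlc [W [W_open W_G]] Hemb.
  pose proof Hemb as [p_in [p_onto [p_cont p_open]]].
  set (out := fun (st : (Y -> Prop) * (Y -> Prop)) x => snd st (p x)).
  set (Good := fun k prev xk (Vk : X -> Prop) (st : (Y -> Prop) * (Y -> Prop)) =>
    compact OY (fst st) /\ saturated OY (fst st) /\ snd st (p xk) /\
    subset (snd st) (fst st) /\ subset (fst st) (W k) /\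
    (forall x, fst st (p x) -> Vk x) /\ subset (fst st) (interior_opt prev)).
  destruct (stateful_strategy O out (fun st => OY (snd st)) Good
              (fun _ => inhabits ((fun _ => True), (fun _ => True))))
    as [s [state [Hout Hgood]]].
  - intros k prev xk Vk OV Vx Hprev.
    destruct (p_open Vk OV) as [V' [OV' HV']].
    destruct (Hlc (p xk) (fun y => (V' y /\ W k y) /\ interior_opt prev y))
      as [Kk [Ik [HKc [HKs [OI [Ixk [HIK HKV]]]]]]].
    + repeat apply (proj1 (proj2 Htop)); auto.
      destruct prev; [apply Hprev | apply Htop].
    + split; [split|].
      * apply HV'; exact Vx.
      * apply W_G, p_in.
      * destruct prev as [st'|]; [apply (proj2 Hprev); exact Vx | exact I].
    + exists (Kk, Ik). split; [exact OI|].
      repeat split; auto; intros y Ky; try apply (HKV y Ky).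
      apply HV', (HKV _ Ky).
  - exists s. split.
    + intros x V n Hlegal. rewrite Hout.
      destruct (Hgood x V n Hlegal) as [OI [_ [_ [Ixn [HIK [_ [HKV _]]]]]]].
      split; [apply p_cont; exact OI|]. split; [exact Ixn|].
      intros x' Ix'. apply HKV, HIK, Ix'.
    + intros x V Hlegal.
      set (K := fun n => fst (state x V n)). set (I := fun n => snd (state x V n)).
      assert (Hg : forall n, Good n (previous (state x V) n) (x n) (V n) (state x V n))
        by (intro n; apply Hgood; auto).
      assert (HKc : forall n, compact OY (K n)) by (intro n; apply Hg).
      assert (HKs : forall n, saturated OY (K n)) by (intro n; apply Hg).
      assert (HIK : forall n, subset (I n) (K n)) by (intro n; apply Hg).
      assert (HKI : forall n, subset (K (S n)) (I n)) by (intro n; apply (Hg (S n))).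
      assert (HKW : forall n, subset (K n) (W n)) by (intro n; apply Hg).
      assert (HKdecr : forall n, subset (K (S n)) (K n))
        by (intros n y Ky; apply HIK, HKI, Ky).
      set (Kinf := fun y => forall n, K n y).
      assert (HKinfG : subset Kinf G) by (intros y Hy; apply W_G; intro k; apply HKW, Hy).
      exists (fun x' => Kinf (p x')). split; [|split; [|split; [|split]]].
      * destruct (inter_nonempty OY Htop Hsob K HKc HKs HKdecr) as [y Hy].
        { intro n. exists (p (x n)). apply HIK, Hg. }
        destruct (p_onto y (HKinfG y Hy)) as [x' <-]. eauto.
      * apply (compact_preimage O OY G p Hemb); [|exact HKinfG].
        apply inter_compact; assumption.
      * apply (saturated_preimage O OY G p Hemb), inter_saturated, HKs.
      * intros n x' Hx'. rewrite Hout. apply HKI, Hx'.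
      * intros U OU HU. destruct (p_open U OU) as [V' [OV' HV']].
        destruct (well_filtered OY Htop Hsob K HKc HKs HKdecr V' OV') as [n Hn].
        { intros y Hy. destruct (p_onto y (HKinfG y Hy)) as [x' <-]. apply HV', HU; exact Hy. }
        exists n. intros x' Hx'. rewrite Hout in Hx'. apply HV', Hn, HIK, Hx'.
Qed.

Theorem proposition9p1 :
  (forall (X : Type) (O : (X -> Prop) -> Prop),
     is_topology O -> domain_complete O -> convergence_choquet_complete O) /\
  (forall (X : Type) (O : (X -> Prop) -> Prop),
     is_topology O -> LCS_complete O -> compactly_choquet_complete O).
Proof.
  split.
  - intros X O _ [D [le [G [Hcd [HG Hhomeo]]]]].
    destruct (homeomorphic_embedding_onto O (scott_open le) G Hhomeo) as [p Hp].
    exact (Gdelta_scott_convergence_choquet_complete O le G p Hcd HG Hp).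
  - intros X O _ [Y [OY [G [Htop [Hsob [Hlc [HG Hhomeo]]]]]]].
    destruct (homeomorphic_embedding_onto O OY G Hhomeo) as [p Hp].
    exact (Gdelta_LCS_compactly_choquet_complete O OY G p Htop Hsob Hlc HG Hp).
Qed.
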